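(* Let $G$ be a COM and let $G'$ be an isometric subgraph of $G$ such that every antipodal subgraph of $G'$ is an antipodal subgraph of $G$. Then $G'$ is a COM.
   Context: Hypercube $Q_n$: vertex set $\{+,-\}^n$, adjacency = differing in one coordinate. A partial cube is an isometric subgraph of a hypercube. A subgraph $H$ of a graph $G$ is convex if it contains every shortest path of $G$ between vertices of $H$, and gated if for every vertex $x$ of $G$ there is $x'\in H$ such that for every $u\in H$ some shortest $x$–$u$ path passes through $x'$. A partial cube $G\subseteq Q_n$ ($n$ minimal) is antipodal if with every vertex it contains the vertex with all coordinates flipped; an antipodal subgraph of $G$ is a convex subgraph which is itself an antipodal partial cube. A COM (complex of oriented matroids, identified with its tope graph) is a partial cube all of whose antipodal subgraphs are gated. *)

(* Graphs are induced subgraphs of the hypercube Q_n,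
   represented by their vertex sets S : {set cube n}. *)
From mathcomp Require Import all_boot.
Set Implicit Arguments. Unset Strict Implicit. Unset Printing Implicit Defensive.

(* Vertices of Q_n: sign vectors {+,-}^n, encoded as 'I_n -> bool. *)
Definition cube (n : nat) := {ffun 'I_n -> bool}.

Section Cube.
Variable n : nat.

Definition hamming (x y : cube n) : nat := #|[set i | x i != y i]|.
Definition adj : rel (cube n) := fun x y => hamming x y == 1.

(* [gpath S x p y]: x :: p is a walk in the induced subgraph on S from x to y;
   its length is size p. *)
Definition gpath (S : {set cube n}) (x : cube n) (p : seq (cube n)) (y : cube n) : Prop :=
  [&& x \in S, all (fun z => z \in S) p, path adj x p & last x p == y].

Definition shortest_path (S : {set cube n}) x p y : Prop :=
  gpath S x p y /\ forall q, gpath S x q y -> size p <= size q.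

Definition isometric_in (H G : {set cube n}) : Prop :=
  H \subset G /\
  forall x y, x \in H -> y \in H ->
    exists p, gpath H x p y /\ forall q, gpath G x q y -> size p <= size q.

Definition partial_cube (G : {set cube n}) : Prop := isometric_in G [set: cube n].

Definition convex_in (H G : {set cube n}) : Prop :=
  H \subset G /\
  forall x y p, x \in H -> y \in H -> shortest_path G x p y ->
    all (fun z => z \in H) p.

Definition gated_in (H G : {set cube n}) : Prop :=
  forall x, x \in G -> exists2 x', x' \in H &
    forall u, u \in H -> exists p, shortest_path G x p u /\ x' \in x :: p.

(* Coordinates that are non-constant on H; restricting to them gives the
   embedding of H in a hypercube of minimal dimension. *)
Definition varying (H : {set cube n}) : {set 'I_n} :=
  [set i | [exists x in H, exists y in H, x i != y i]].

(* antipode of x w.r.t. the minimal embedding of H: flip all coordinates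
   of the minimal embedding *)
Definition antipode (H : {set cube n}) (x : cube n) : cube n :=
  [ffun i => if i \in varying H then ~~ x i else x i].

Definition antipodal (H : {set cube n}) : Prop :=
  H != set0 /\ partial_cube H /\ forall x, x \in H -> antipode H x \in H.

Definition antipodal_sub (H G : {set cube n}) : Prop :=
  convex_in H G /\ antipodal H.

(* COM (tope graph): partial cube all of whose antipodal subgraphs are gated *)
Definition COM (G : {set cube n}) : Prop :=
  partial_cube G /\ forall H, antipodal_sub H G -> gated_in H G.

End Cube.

(* Isometric embeddings compose, so G' is a partial cube.  An antipodal
   subgraph H of G' is antipodal in G, hence has a gate x' in G for each
   x in G'.  Since G' is isometric in G, the two pieces x -> x' and x' -> u of
   a G-geodesic through x' can be replaced by G'-geodesics of the same
   lengths, whose concatenation is a G'-geodesic through x': x' is also a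
   gate of H in G'. *)
From mathcomp Require Import all_boot.

Set Implicit Arguments.
Unset Strict Implicit.
Unset Printing Implicit Defensive.

Section Geodesics.
Variable n : nat.
Implicit Types (S T G H K : {set cube n}) (x y z u : cube n) (p q : seq (cube n)).

Lemma gpath_subset S T x p y : S \subset T -> gpath S x p y -> gpath T x p y.
Proof.
move=> /subsetP sST /and4P[xS pS pp ly]; apply/and4P; split=> //.
  exact: sST.
by apply/allP=> z /(allP pS) /sST.
Qed.

Lemma gpath_last S x p y : gpath S x p y -> last x p = y.
Proof. by case/and4P=> _ _ _ /eqP. Qed.

Lemma gpath_cat S x p y q z :
  gpath S x p y -> gpath S y q z -> gpath S x (p ++ q) z.
Proof.
move=> /and4P[xS pS pp /eqP ly] /and4P[yS qS qp lz]; apply/and4P; split=> //.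
- by rewrite all_cat pS.
- by rewrite cat_path pp ly.
- by rewrite last_cat ly.
Qed.

Lemma gpath_split S x p y z :
  gpath S x p y -> z \in x :: p ->
  exists p1 p2, [/\ p = p1 ++ p2, gpath S x p1 z & gpath S z p2 y].
Proof.
move=> + zp; case/splitPl: zp => p1 p2 lz /and4P[xS pS pp ly].
move: pS pp ly; rewrite all_cat cat_path last_cat => /andP[p1S p2S] /andP[pp1 pp2] ly.
have zS : z \in S.
  by move: (mem_last x p1); rewrite lz inE => /orP[/eqP -> | /(allP p1S)].
by exists p1, p2; split=> //; apply/and4P; split=> //; rewrite -?lz.
Qed.

Lemma isometric_in_trans H G K :
  isometric_in H G -> isometric_in G K -> isometric_in H K.
Proof.
move=> [sHG isoHG] [sGK isoGK]; split; first exact: subset_trans sHG sGK.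
move=> x y xH yH; have [p [pH pmin]] := isoHG x y xH yH.
have [r [rG rmin]] := isoGK x y (subsetP sHG x xH) (subsetP sHG y yH).
by exists p; split=> // q qK; apply: leq_trans (pmin _ rG) (rmin _ qK).
Qed.

Lemma shortest_path_isometric_via G' G x p u z :
  isometric_in G' G -> x \in G' -> u \in G' -> z \in G' ->
  shortest_path G x p u -> z \in x :: p ->
  exists q, shortest_path G' x q u /\ z \in x :: q.
Proof.
move=> [sG'G isoG'G] xG' uG' zG' [pG pmin] zp.
have [p1 [p2 [ep p1G p2G]]] := gpath_split pG zp.
have [q1 [q1G' q1min]] := isoG'G x z xG' zG'.
have [q2 [q2G' q2min]] := isoG'G z u zG' uG'.
exists (q1 ++ q2); split; last by rewrite -cat_cons mem_cat -(gpath_last q1G') mem_last.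
split; first exact: gpath_cat q1G' q2G'.
move=> q qG'; apply: leq_trans (pmin _ (gpath_subset sG'G qG')).
by rewrite ep !size_cat leq_add // ?q1min ?q2min.
Qed.

Lemma gated_in_isometric H G' G :
  isometric_in G' G -> H \subset G' -> gated_in H G -> gated_in H G'.
Proof.
move=> isoG'G /subsetP sHG' gatHG x xG'.
have [x' x'H gx] := gatHG x (subsetP isoG'G.1 x xG').
exists x' => // u uH; have [p [pG x'p]] := gx u uH.
exact: shortest_path_isometric_via isoG'G xG' (sHG' u uH) (sHG' x' x'H) pG x'p.
Qed.

End Geodesics.

Theorem mainTheorem5 (n : nat) (G G' : {set cube n}) :
  COM G ->
  isometric_in G' G ->
  (forall H : {set cube n}, antipodal_sub H G' -> antipodal_sub H G) ->
  COM G'.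
Proof.
move=> [pcG gatG] isoG'G antG'G; split.
  exact: isometric_in_trans isoG'G pcG.
move=> H antH; have [[sHG' _] _] := antH.
exact: gated_in_isometric isoG'G sHG' (gatG H (antG'G H antH)).
Qed.
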